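(* Let $l,n$ be positive integers, $\mathbf{x}_1,\dots,\mathbf{x}_l\in\mathbb{R}^n$, $y_1,\dots,y_l\in\mathbb{R}$, $a_1,\dots,a_l,b_1,\dots,b_l\in\mathbb{R}$, and let $\alpha<\beta$ be real numbers. Let $\mathbf Z\in\mathbb{R}^{l\times n}$ have $i$-th row $a_i\mathbf x_i^T$ and $\bar{\mathbf y}=(b_1y_1,\dots,b_ly_l)^T$. For $C>0$ let $\theta^*(C)$ denote an optimal solution of $$\min_{\theta\in[\alpha,\beta]^l}\ \tfrac{C}{2}\|\mathbf Z^T\theta\|^2-\langle\bar{\mathbf y},\theta\rangle.$$ Then for any $C>C_0>0$ and any such optimal solutions $\theta^*(C)$, $\theta^*(C_0)$, $$\Big\|\mathbf Z^T\theta^*(C)-\tfrac{C_0+C}{2C}\mathbf Z^T\theta^*(C_0)\Big\|\le\tfrac{C-C_0}{2C}\|\mathbf Z^T\theta^*(C_0)\|.$$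
   Context: In the paper this is the dual of the problem $\min_{\mathbf w}\frac12\|\mathbf w\|^2+C\sum_{i}\varphi(\mathbf w^T(a_i\mathbf x_i)+b_iy_i)$, where $\varphi:\mathbb{R}\to[0,\infty)$ is nonconstant, continuous and sublinear, and $[\alpha,\beta]$ is the interval on which the conjugate $\varphi^*$ vanishes ($\varphi^*=+\infty$ outside it). $\|\cdot\|$ is the Euclidean norm. *)

From mathcomp Require Import all_boot all_order all_algebra.
From mathcomp Require Import reals.
Set Implicit Arguments. Unset Strict Implicit. Unset Printing Implicit Defensive.
Import Order.TTheory GRing.Theory Num.Theory.
Local Open Scope ring_scope.

Definition enorm (R : realType) (n : nat) (v : 'cV[R]_n) : R :=
  Num.sqrt (\sum_(i < n) v i 0 ^+ 2).

Definition inner (R : realType) (n : nat) (u v : 'cV[R]_n) : R :=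
  \sum_(i < n) u i 0 * v i 0.

Definition Zmat (R : realType) (l n : nat) (a : 'I_l -> R) (x : 'I_l -> 'cV[R]_n)
  : 'M[R]_(l, n) := \matrix_(i < l, j < n) (a i * x i j 0).

Definition ybar (R : realType) (l : nat) (b y : 'I_l -> R) : 'cV[R]_l :=
  \col_(i < l) (b i * y i).

Definition in_box (R : realType) (l : nat) (alpha beta : R) (t : 'cV[R]_l) : Prop :=
  forall i, alpha <= t i 0 <= beta.

Definition dual_obj (R : realType) (l n : nat) (Z : 'M[R]_(l, n)) (yb : 'cV[R]_l)
  (C : R) (t : 'cV[R]_l) : R :=
  C / 2 * enorm (Z^T *m t) ^+ 2 - inner yb t.

Definition is_dual_opt (R : realType) (l n : nat) (Z : 'M[R]_(l, n)) (yb : 'cV[R]_l)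
  (alpha beta C : R) (t : 'cV[R]_l) : Prop :=
  in_box alpha beta t /\
  forall t', in_box alpha beta t' -> dual_obj Z yb C t <= dual_obj Z yb C t'.

(* A dual optimum is characterised by the variational inequality
   [C <Z^T t, Z^T (t' - t)> >= <ybar, t' - t>] for every feasible [t'].
   Writing it at [t] against [t0] and at [t0] against [t] and adding gives
   [C |u|^2 - (C + C0) <u, u0> + C0 |u0|^2 <= 0] for [u = Z^T t], [u0 = Z^T t0];
   completing the square, this says exactly that [u] lies in the ball of centre
   [(C0 + C)/(2C) u0] and radius [(C - C0)/(2C) |u0|]. *)
From mathcomp Require Import all_boot all_order all_algebra.
From mathcomp Require Import reals.
From mathcomp Require Import ring lra.
Set Implicit Arguments. Unset Strict Implicit. Unset Printing Implicit Defensive.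
Import Order.TTheory GRing.Theory Num.Theory.
Local Open Scope ring_scope.

Section InnerProduct.
Variables (R : realType) (n : nat).
Implicit Types (u v w : 'cV[R]_n) (s : R).

Lemma innerC u v : inner u v = inner v u.
Proof. by apply: eq_bigr => i _; rewrite mulrC. Qed.

Lemma innerDl u v w : inner (u + v) w = inner u w + inner v w.
Proof. by rewrite /inner -big_split; apply: eq_bigr => i _; rewrite !mxE mulrDl. Qed.

Lemma innerZl s u w : inner (s *: u) w = s * inner u w.
Proof. by rewrite /inner mulr_sumr; apply: eq_bigr => i _; rewrite !mxE mulrA. Qed.

Lemma innerNl u w : inner (- u) w = - inner u w.
Proof. by rewrite -scaleN1r innerZl mulN1r. Qed.

Lemma innerDr u v w : inner w (u + v) = inner w u + inner w v.
Proof. by rewrite innerC innerDl !(innerC _ w). Qed.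

Lemma innerZr s u w : inner w (s *: u) = s * inner w u.
Proof. by rewrite innerC innerZl innerC. Qed.

Lemma innerNr u w : inner w (- u) = - inner w u.
Proof. by rewrite innerC innerNl innerC. Qed.

Lemma inner_ge0 u : 0 <= inner u u.
Proof. by apply: sumr_ge0 => i _; rewrite -expr2 sqr_ge0. Qed.

Lemma enorm_sqr u : enorm u ^+ 2 = inner u u.
Proof.
rewrite /enorm sqr_sqrtr; last by apply: sumr_ge0 => i _; rewrite sqr_ge0.
by apply: eq_bigr => i _; rewrite expr2.
Qed.

Lemma enorm_ge0 u : 0 <= enorm u.
Proof. exact: sqrtr_ge0. Qed.

Lemma enorm_le_scale m u v : 0 <= m ->
  inner u u <= m ^+ 2 * inner v v -> enorm u <= m * enorm v.
Proof.
move=> m0 le_uv; rewrite -ler_sqr ?nnegrE ?mulr_ge0 ?enorm_ge0 //.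
by rewrite exprMn !enorm_sqr.
Qed.

End InnerProduct.

Lemma ge0_of_quadratic_ge0_near0 (R : realFieldType) (g K : R) : 0 <= K ->
  (forall s, 0 < s -> s <= 1 -> 0 <= s * g + s ^+ 2 * K) -> 0 <= g.
Proof.
move=> K0 quad_ge0; rewrite leNgt; apply/negP => g_lt0.
have Kg_gt0 : 0 < K - g by lra.
pose s := - g / (K - g).
have s_gt0 : 0 < s by apply: divr_gt0; lra.
have s_le1 : s <= 1 by rewrite ler_pdivrMr //; lra.
have gsK : g + s * K = - (g * g) / (K - g) by rewrite /s; field; rewrite gt_eqF.
have gg_gt0 : 0 < g * g by nra.
have gsK_lt0 : g + s * K < 0 by rewrite gsK mulNr oppr_lt0 divr_gt0.
have := quad_ge0 s s_gt0 s_le1.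
by rewrite expr2 -mulrA -mulrDr pmulr_rge0 // leNgt gsK_lt0.
Qed.

Section DualOptimality.
Variables (R : realType) (l n : nat) (Z : 'M[R]_(l, n)) (yb : 'cV[R]_l).
Variables (alpha beta : R).

Lemma in_box_segment (t t' : 'cV[R]_l) s : in_box alpha beta t -> in_box alpha beta t' ->
  0 <= s -> s <= 1 -> in_box alpha beta (t + s *: (t' - t)).
Proof.
move=> bt bt' s0 s1 i; rewrite !mxE.
by have /andP[? ?] := bt i; have /andP[? ?] := bt' i; apply/andP; split; nra.
Qed.

Lemma dual_obj_shift C t d s :
  dual_obj Z yb C (t + s *: d) - dual_obj Z yb C t =
  s * (C * inner (Z^T *m t) (Z^T *m d) - inner yb d)
    + s ^+ 2 * (C / 2 * inner (Z^T *m d) (Z^T *m d)).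
Proof.
rewrite /dual_obj mulmxDr -scalemxAr !enorm_sqr.
rewrite !innerDl !innerDr !innerZl !innerZr (innerC (Z^T *m d) (Z^T *m t)).
by field.
Qed.

Lemma dual_opt_variational_ineq C t t' : 0 <= C ->
  is_dual_opt Z yb alpha beta C t -> in_box alpha beta t' ->
  0 <= C * inner (Z^T *m t) (Z^T *m (t' - t)) - inner yb (t' - t).
Proof.
move=> C0 [bt t_min] bt'.
apply: (ge0_of_quadratic_ge0_near0 (K := C / 2 * inner (Z^T *m (t' - t)) (Z^T *m (t' - t)))).
  by rewrite mulr_ge0 ?divr_ge0 ?inner_ge0.
move=> s s0 s1; rewrite -dual_obj_shift subr_ge0.
exact: t_min (in_box_segment bt bt' (ltW s0) s1).
Qed.

Lemma dual_opt_monotone C C0 t t0 : 0 <= C0 -> 0 <= C ->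
  is_dual_opt Z yb alpha beta C t -> is_dual_opt Z yb alpha beta C0 t0 ->
  C * inner (Z^T *m t) (Z^T *m t) - (C + C0) * inner (Z^T *m t) (Z^T *m t0)
    + C0 * inner (Z^T *m t0) (Z^T *m t0) <= 0.
Proof.
move=> C0_ge0 C_ge0 opt opt0.
have := dual_opt_variational_ineq C_ge0 opt opt0.1.
have := dual_opt_variational_ineq C0_ge0 opt0 opt.1.
rewrite !mulmxBr !innerDr !innerNr (innerC (Z^T *m t0) (Z^T *m t)).
lra.
Qed.

End DualOptimality.

Lemma enorm_sub_scale_le_of_monotone (R : realType) (n : nat) (C C0 : R) (u u0 : 'cV[R]_n) :
  0 < C0 < C ->
  C * inner u u - (C + C0) * inner u u0 + C0 * inner u0 u0 <= 0 ->
  enorm (u - ((C0 + C) / (2 * C)) *: u0) <= (C - C0) / (2 * C) * enorm u0.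
Proof.
move=> /andP[C0_gt0 C0_lt_C] mono; have C_gt0 : 0 < C by lra.
apply: enorm_le_scale; first by rewrite divr_ge0 //; lra.
rewrite -subr_le0 !innerDl !innerDr !innerNl !innerNr !innerZl !innerZr.
rewrite (innerC u0 u).
set p := inner u u; set q := inner u u0; set r := inner u0 u0.
have -> : p - (C0 + C) / (2 * C) * q
    + (- ((C0 + C) / (2 * C) * q) - - ((C0 + C) / (2 * C) * ((C0 + C) / (2 * C) * r)))
    - ((C - C0) / (2 * C)) ^+ 2 * r
  = (C * p - (C + C0) * q + C0 * r) / C by field; rewrite gt_eqF.
by rewrite pmulr_lle0 ?invr_gt0.
Qed.

Theorem theorem2 (R : realType) (l n : nat) (hl : (0 < l)%N) (hn : (0 < n)%N)
  (x : 'I_l -> 'cV[R]_n) (y a b : 'I_l -> R) (alpha beta : R)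
  (hab : alpha < beta) (C C0 : R) (hC0 : 0 < C0) (hC : C0 < C)
  (t t0 : 'cV[R]_l) :
  is_dual_opt (Zmat a x) (ybar b y) alpha beta C t ->
  is_dual_opt (Zmat a x) (ybar b y) alpha beta C0 t0 ->
  enorm ((Zmat a x)^T *m t - ((C0 + C) / (2 * C)) *: ((Zmat a x)^T *m t0))
    <= (C - C0) / (2 * C) * enorm ((Zmat a x)^T *m t0).
Proof.
move=> opt opt0; apply: enorm_sub_scale_le_of_monotone; first by rewrite hC0 hC.
by apply: dual_opt_monotone opt opt0; rewrite ltW // (lt_trans hC0 hC).
Qed.
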